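(* Let $P_6(x,y,s)=s-(x+y+1)\big(\frac1x+\frac1y+1\big)$ and $V(P_6)=\{(x,y,s)\in(\mathbb{C}^\times)^3 : P_6(x,y,s)=0\}$. The map $(x,y,s)\mapsto s$ restricts to a fibration of the Deninger cycle $\{(x,y,s)\in V(P_6) : |x|=|y|=1,\ |s|>1\}\setminus\{(1,1,9)\}$ above the interval $(1,9)$. *)

From HB Require Import structures.
From mathcomp Require Import all_boot all_order all_algebra.
From mathcomp Require Import all_classical all_reals all_analysis.
From mathcomp Require Import complex.
Import Order.TTheory GRing.Theory Num.Theory.
Import numFieldTopology.Exports numFieldNormedType.Exports.
Local Open Scope classical_set_scope.
Local Open Scope ring_scope.

(* The complex numbers C = R[i] (R a real closed / real type), seen as a
   numClosedFieldType so that it inherits the norm topology of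
   MathComp-Analysis. *)
Definition CC (R : realType) : numClosedFieldType := R[i].

Definition P6 {R : realType} (x y s : CC R) : CC R :=
  s - (x + y + 1) * (x^-1 + y^-1 + 1).

Definition VP6 (R : realType) : set (CC R * CC R * CC R) :=
  [set p | [/\ p.1.1 != 0, p.1.2 != 0, p.2 != 0 & P6 p.1.1 p.1.2 p.2 = 0]].

Definition deninger_cycle (R : realType) : set (CC R * CC R * CC R) :=
  [set p | VP6 R p /\ [/\ `|p.1.1| = 1, `|p.1.2| = 1 & 1 < `|p.2|]].

Definition interval_1_9 (R : realType) : set (CC R) :=
  [set s | s \is Num.real /\ 1 < s < 9].

(* f restricted to A is a (locally trivial) fibration above B:
   f maps A onto B, and every b in B has an open neighbourhood U such that,
   writing U_B := U ∩ B (open in B) and A_U := A ∩ f^{-1}(U_B), there is a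
   fibre space F and a homeomorphism h : A_U -> U_B × F (with inverse g)
   commuting with the projections (fst ∘ h = f on A_U).  All topologies are
   the subspace topologies. *)
Definition fibration_above {X Y : topologicalType} (f : X -> Y)
    (A : set X) (B : set Y) : Prop :=
  f @` A = B /\
  forall b, B b ->
    exists U : set Y, [/\ open U, U b &
      exists (F : topologicalType) (h : X -> Y * F) (g : Y * F -> X),
        let AU := A `&` f @^-1` (U `&` B) in
        let UF := (U `&` B) `*` [set: F] in
        [/\ {within AU, continuous h},
            {within UF, continuous g},
            (forall x, AU x -> [/\ UF (h x), g (h x) = x & (h x).1 = f x]) &
            (forall q, UF q -> AU (g q) /\ h (g q) = q)]].

From HB Require Import structures.
From mathcomp Require Import all_boot all_order all_algebra.
From mathcomp Require Import all_classical all_reals all_analysis.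
From mathcomp Require Import complex.
From mathcomp Require Import ring lra.
Import Order.TTheory GRing.Theory Num.Theory.
Import numFieldTopology.Exports numFieldNormedType.Exports.
Local Open Scope classical_set_scope.
Local Open Scope ring_scope.
Local Open Scope complex_scope.

(* On the torus |x| = |y| = 1 the value of s is |1 + x + y|^2 <= 9, with
   equality only at x = y = 1; so the fibre over s in (1,9) is
   {(x,y) : |1 + x + y|^2 = s}.  Write 1 + x + y = sqrt s (c + i d)
   and x, y = (x + y)(1/2 +- i t) for a real t (two unit vectors with sum x + y).
   Then |x| = 1 reads c = kappa + e^2, where kappa = (s - 3) / (2 sqrt s) and e
   is t rescaled by |x + y| sqrt (2 / sqrt s).  So the fibre is the oval
   (kappa + e^2)^2 + d^2 = 1 in the (e,d)-plane, with kappa in (-1,1), and an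
   explicit rescaling of e and d maps it onto the unit circle.  All formulas are
   continuous in s, which gives a global trivialization over (1,9) with fibre
   the circle. *)

Lemma sqrt_neq0 {R : realType} (t : R) : 0 < t -> Num.sqrt t != 0.
Proof. by rewrite sqrtr_eq0 -ltNge. Qed.

Section Plane.
Context {R : realType}.
Local Notation C := (CC R).
Local Notation Re := (@complex.Re R).
Local Notation Im := (@complex.Im R).
Implicit Types (x y z u : C) (t : R).

Definition sqnorm z : R := Re z ^+ 2 + Im z ^+ 2.

Definition cross x y : R := Im x * Re y - Re x * Im y.

Lemma sqnorm_ge0 z : 0 <= sqnorm z.
Proof. by rewrite addr_ge0 ?sqr_ge0. Qed.

Lemma norm1E z : `|z| = 1 <-> sqnorm z = 1.
Proof.
rewrite normc_def -/(sqnorm z); split=> [[] /(congr1 (fun v => v ^+ 2))|->]; last first.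
  by rewrite sqrtr1.
by rewrite sqr_sqrtr ?sqnorm_ge0 // expr1n.
Qed.

Lemma sqnorm_1D u : sqnorm (1 + u) = 1 + 2 * Re u + sqnorm u.
Proof. by case: u => a b; rewrite /sqnorm /=; ring. Qed.

Definition chord1 u t : C := u * (2^-1 +i* t).
Definition chord2 u t : C := u * (2^-1 -i* t).

Lemma chord_add u t : chord1 u t + chord2 u t = u.
Proof.
by case: u => a b; apply/eqP; rewrite eq_complex /=; apply/andP; split; apply/eqP; field.
Qed.

Lemma sqnorm_chord1 u t : sqnorm (chord1 u t) = sqnorm u * (4^-1 + t ^+ 2).
Proof. by case: u => a b; rewrite /sqnorm /=; field. Qed.

Lemma sqnorm_chord2 u t : sqnorm (chord2 u t) = sqnorm u * (4^-1 + t ^+ 2).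
Proof. by case: u => a b; rewrite /sqnorm /=; field. Qed.

Lemma cross_chord u t : cross (chord1 u t) (chord2 u t) = sqnorm u * t.
Proof. by case: u => a b; rewrite /sqnorm /cross /=; field. Qed.

Lemma cross_sqr x y : sqnorm x = 1 -> sqnorm y = 1 ->
  4 * cross x y ^+ 2 = sqnorm (x + y) * (4 - sqnorm (x + y)).
Proof.
case: x y => [x1 x2] [y1 y2]; rewrite /sqnorm /cross /= => hx hy.
have lagrange : (x2 * y1 - x1 * y2) ^+ 2 + (x1 * y1 + x2 * y2) ^+ 2 =
    (x1 ^+ 2 + x2 ^+ 2) * (y1 ^+ 2 + y2 ^+ 2) by ring.
rewrite hx hy mul1r in lagrange.
have -> : (x1 + y1) ^+ 2 + (x2 + y2) ^+ 2 =
    (x1 ^+ 2 + x2 ^+ 2) + (y1 ^+ 2 + y2 ^+ 2) + 2 * (x1 * y1 + x2 * y2) by ring.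
rewrite hx hy; lra.
Qed.

Lemma chord_decomp x y : sqnorm x = sqnorm y -> sqnorm (x + y) != 0 ->
  let t := cross x y / sqnorm (x + y) in
  chord1 (x + y) t = x /\ chord2 (x + y) t = y.
Proof.
case: x y => [x1 x2] [y1 y2]; rewrite /sqnorm /cross /= => exy W0.
have dxy : y1 ^+ 2 + y2 ^+ 2 - (x1 ^+ 2 + x2 ^+ 2) = 0 by rewrite exy subrr.
pose W := (x1 + y1) ^+ 2 + (x2 + y2) ^+ 2.
(* each coordinate of chord1 (x + y) t - x is (x + y)_i (|y|^2 - |x|^2) / (2 W) *)
split; apply/eqP; rewrite eq_complex /=; apply/andP; split; apply/eqP.
- by rewrite -[RHS]addr0 -(mul0r ((x1 + y1) / 2 / W)) -dxy /W; field.
- by rewrite -[RHS]addr0 -(mul0r ((x2 + y2) / 2 / W)) -dxy /W; field.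
- by rewrite -[RHS]subr0 -(mul0r ((x1 + y1) / 2 / W)) -dxy /W; field.
- by rewrite -[RHS]subr0 -(mul0r ((x2 + y2) / 2 / W)) -dxy /W; field.
Qed.

End Plane.

Section Continuity.
Context {R : realType} {T : Type} {F : set_system T} {FF : Filter F}.
Local Notation C := (CC R).
Local Notation Re := (@complex.Re R).
Local Notation Im := (@complex.Im R).

Lemma cvg_Re (f : T -> C) (z : C) : f @ F --> z -> (fun t => Re (f t)) @ F --> Re z.
Proof.
move=> /cvgrPdist_lt fz; apply/cvgrPdist_lt => e e0.
apply: filterS (fz e%:C _) => [t|]; last by rewrite ltcR.
rewrite normc_def ltcR; move: (f t) => w {fz}; case: z w => [a b] [c d] /=.
apply: le_lt_trans.
by rewrite -sqrtr_sqr ler_wsqrtr // lerDl sqr_ge0.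
Qed.

Lemma cvg_Im (f : T -> C) (z : C) : f @ F --> z -> (fun t => Im (f t)) @ F --> Im z.
Proof.
move=> /cvgrPdist_lt fz; apply/cvgrPdist_lt => e e0.
apply: filterS (fz e%:C _) => [t|]; last by rewrite ltcR.
rewrite normc_def ltcR; move: (f t) => w {fz}; case: z w => [a b] [c d] /=.
apply: le_lt_trans.
by rewrite -sqrtr_sqr ler_wsqrtr // lerDr sqr_ge0.
Qed.

Lemma cvg_complex (f g : T -> R) (a b : R) : f @ F --> a -> g @ F --> b ->
  (fun t => (f t +i* g t : C)) @ F --> (a +i* b : C).
Proof.
move=> /cvgrPdist_lt fa /cvgrPdist_lt gb; apply/cvgrPdist_lt => -[e1 e2].
rewrite ltcE /= => /andP[/eqP -> e0]; have e20 : 0 < e1 / 2 by rewrite divr_gt0.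
apply: filterS2 (fa _ e20) (gb _ e20) => t; rewrite normc_def ltcR /=.
move: (a - f t) (b - g t) => u v hu hv; apply: le_lt_trans (_ : `|u| + `|v| < e1).
  rewrite -[X in _ <= X]ger0_norm ?addr_ge0 // -sqrtr_sqr ler_wsqrtr //.
  rewrite -[u ^+ 2]real_normK ?num_real // -[v ^+ 2]real_normK ?num_real //.
  by have := normr_ge0 u; have := normr_ge0 v; nra.
by rewrite [e1](splitr e1) ltrD.
Qed.

Lemma cvg_sqr (f : T -> R) (a : R) : f @ F --> a -> (fun t => f t ^+ 2) @ F --> a ^+ 2.
Proof. by move=> fa; under eq_fun do rewrite expr2; rewrite expr2; apply: cvgM. Qed.

Lemma cvg_sqrt (f : T -> R) (a : R) : f @ F --> a -> (fun t => Num.sqrt (f t)) @ F --> Num.sqrt a.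
Proof. by move=> fa; apply: continuous_cvg => //; exact: sqrt_continuous. Qed.

Lemma cvg_sqnorm (f : T -> C) (z : C) : f @ F --> z -> (fun t => sqnorm (f t)) @ F --> sqnorm z.
Proof.
by move=> fz; rewrite /sqnorm; apply: cvgD; apply: cvg_sqr; [apply: cvg_Re | apply: cvg_Im].
Qed.

End Continuity.

(* Syntax-directed on purpose: [assumption] and blind [apply] try expensive
   conversions between the filter structures of R and C, so hypotheses are
   only used when their function is syntactically the goal's. *)
Ltac cvg_auto := repeat match goal with
  | |- (fun _ => ?c) @ _ --> _ => apply: cvg_cst
  | |- (fun t => @?f t + @?g t) @ _ --> _ => apply: cvgD
  | |- (fun t => - @?f t) @ _ --> _ => apply: cvgN
  | |- (fun t => @?f t * @?g t) @ _ --> _ => apply: cvgM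
  | |- (fun t => (@?f t)^-1) @ _ --> _ => apply: cvgV
  | |- (fun t => @?f t ^+ 2) @ _ --> _ => apply: cvg_sqr
  | |- (fun t => Num.sqrt (@?f t)) @ _ --> _ => apply: cvg_sqrt
  | |- (fun t => complex.Re (@?f t)) @ _ --> _ => apply: (cvg_Re f)
  | |- (fun t => complex.Im (@?f t)) @ _ --> _ => apply: (cvg_Im f)
  | |- (fun t => sqnorm (@?f t)) @ _ --> _ => apply: cvg_sqnorm
  | |- (fun t => (@?f t +i* @?g t)%C) @ _ --> _ => apply: cvg_complex
  | |- (fun t => ?h t) @ ?G --> ?a => change (h @ G --> a)
  | H : cvg_to (nbhs (fmap ?h _)) _ |- cvg_to (nbhs (fmap ?h' _)) _ =>
      constr_eq h h'; exact H
  end.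

Section Oval.
Context {R : realType} (k : R).
Hypothesis k_bounds : -1 < k < 1.
Local Notation C := (CC R).
Local Notation Re := (@complex.Re R).
Local Notation Im := (@complex.Im R).
Implicit Types (z : C) (e d : R).

Definition on_oval e d : Prop := (k + e ^+ 2) ^+ 2 + d ^+ 2 = 1.

Definition oval_coord e d : C :=
  (e / Num.sqrt (1 - k)) +i* (d / (Num.sqrt (1 - k) * Num.sqrt (1 + k + e ^+ 2))).

Definition oval_e z : R := Re z * Num.sqrt (1 - k).

Definition oval_d z : R :=
  Im z * Num.sqrt (1 - k) * Num.sqrt (1 + k + oval_e z ^+ 2).

Let sqrt_1Bk_neq0 : Num.sqrt (1 - k) != 0.
Proof. by rewrite sqrtr_eq0 -ltNge subr_gt0; case/andP: k_bounds. Qed.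

Let sqrt_1Dk_neq0 e : Num.sqrt (1 + k + e ^+ 2) != 0.
Proof.
rewrite sqrtr_eq0 -ltNge; have := sqr_ge0 e; case/andP: k_bounds => *; lra.
Qed.

Lemma oval_eK e d : oval_e (oval_coord e d) = e.
Proof. by rewrite /oval_e /= divfK. Qed.

Lemma oval_dK e d : oval_d (oval_coord e d) = d.
Proof. by rewrite /oval_d oval_eK /= -mulrA divfK // mulf_neq0. Qed.

Lemma oval_coordK z : oval_coord (oval_e z) (oval_d z) = z.
Proof.
by case: z => a b; rewrite /oval_coord /oval_d /oval_e /= mulfK // -(mulrA b) mulfK // mulf_neq0.
Qed.

Lemma sqnorm_oval_coord e d : sqnorm (oval_coord e d) - 1 =
  ((k + e ^+ 2) ^+ 2 + d ^+ 2 - 1) / ((1 - k) * (1 + k + e ^+ 2)).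
Proof.
have [k1 k2] : -1 < k /\ k < 1 by apply/andP.
have e2 := sqr_ge0 e.
rewrite /sqnorm /= !expr_div_n !exprMn !sqr_sqrtr; try lra.
by field; apply/andP; split; apply: lt0r_neq0; lra.
Qed.

Lemma oval_coord_unit e d : sqnorm (oval_coord e d) = 1 <-> on_oval e d.
Proof.
have [k1 k2] : -1 < k /\ k < 1 by apply/andP.
have den : (1 - k) * (1 + k + e ^+ 2) != 0.
  by apply: lt0r_neq0; have := sqr_ge0 e; nra.
have E := sqnorm_oval_coord e d; rewrite /on_oval; split=> h.
  move: E; rewrite h subrr => /esym/eqP.
  by rewrite mulf_eq0 invr_eq0 (negbTE den) orbF subr_eq0 => /eqP.
by apply/eqP; rewrite -subr_eq0 E h subrr mul0r.
Qed.

Lemma unit_on_oval z : sqnorm z = 1 -> on_oval (oval_e z) (oval_d z).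
Proof. by rewrite -oval_coord_unit oval_coordK. Qed.

End Oval.

Arguments oval_eK {R k}.
Arguments oval_dK {R k}.
Arguments oval_coordK {R k}.
Arguments oval_coord_unit {R k}.
Arguments unit_on_oval {R k} k_bounds {z}.

Section Fibre.
Context {R : realType} (s : R).
Hypothesis s_bounds : 1 < s < 9.
Local Notation C := (CC R).
Local Notation Re := (@complex.Re R).
Local Notation Im := (@complex.Im R).
Local Notation r := (Num.sqrt s).
Implicit Types (x y z : C).

Definition kappa : R := (s - 3) / (2 * r).

(* For (x,y) in the fibre, 1 + x + y = r ((kappa + e^2) + i d) with e, d below;
   e is the signed half-distance cross x y / |x + y| scaled by sqrt (2 / r). *)
Definition fibre_e x y : R :=
  2 * cross x y / (Num.sqrt (sqnorm (x + y)) * Num.sqrt (2 * r)).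

Definition fibre_d x y : R := Im (x + y) / r.

Definition fibre_coord x y : C := oval_coord kappa (fibre_e x y) (fibre_d x y).

Definition fibre_sum z : C :=
  (r * (kappa + oval_e kappa z ^+ 2) - 1) +i* (r * oval_d kappa z).

Definition fibre_t z : R :=
  oval_e kappa z * Num.sqrt (2 * r) / (2 * Num.sqrt (sqnorm (fibre_sum z))).

Definition fibre_point z : C * C :=
  (chord1 (fibre_sum z) (fibre_t z), chord2 (fibre_sum z) (fibre_t z)).

Let r_sqr : r ^+ 2 = s.
Proof. by rewrite sqr_sqrtr //; case/andP: s_bounds => *; lra. Qed.

Let r_gt1 : 1 < r.
Proof. have := sqrtr_ge0 s; have := r_sqr; case/andP: s_bounds => *; nra. Qed.

Let r_lt3 : r < 3.
Proof. have := r_gt1; have := r_sqr; case/andP: s_bounds => *; nra. Qed.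

Let r_neq0 : r != 0.
Proof. by apply: lt0r_neq0; have := r_gt1; lra. Qed.

Let sqrt_2r_neq0 : Num.sqrt (2 * r) != 0.
Proof. by rewrite sqrtr_eq0 -ltNge; have := r_gt1; lra. Qed.

Let r_kappa : 2 * r * kappa = s - 3.
Proof. by rewrite /kappa; field; rewrite r_neq0. Qed.

Lemma kappa_bounds : -1 < kappa < 1.
Proof.
have := r_gt1; have := r_lt3; have := r_sqr; rewrite /kappa => r2 r3 r1.
by rewrite ltr_pdivlMr ?ltr_pdivrMr; try lra; apply/andP; split; nra.
Qed.

Lemma sqnorm_add_gt0 x y : sqnorm (1 + x + y) = s -> 0 < sqnorm (x + y).
Proof.
rewrite -addrA sqnorm_1D => h; have := sqnorm_ge0 (x + y).
rewrite le_eqVlt => /orP[/eqP W0|//]; move: h; rewrite -W0 addr0.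
suff -> : Re (x + y) = 0 by case/andP: s_bounds => *; lra.
move: W0; rewrite /sqnorm; have := sqr_ge0 (Im (x + y)).
by move=> *; apply/eqP; rewrite -sqrf_eq0 eq_le sqr_ge0 andbT; lra.
Qed.

Lemma fibre_e_sqr x y : sqnorm x = 1 -> sqnorm y = 1 -> sqnorm (1 + x + y) = s ->
  2 * r * fibre_e x y ^+ 2 = 4 - sqnorm (x + y).
Proof.
move=> hx hy hs; have W0 := sqnorm_add_gt0 _ _ hs.
have r2 : 0 <= 2 * r by have := r_gt1; lra.
rewrite /fibre_e expr_div_n !exprMn !sqr_sqrtr ?(ltW W0) //.
rewrite [2 ^+ 2 * _](_ : _ = 4 * cross x y ^+ 2); last by ring.
by rewrite cross_sqr //; field; rewrite r_neq0 lt0r_neq0.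
Qed.

Lemma kappa_fibre_e x y : sqnorm x = 1 -> sqnorm y = 1 -> sqnorm (1 + x + y) = s ->
  r * (kappa + fibre_e x y ^+ 2) = 1 + Re (x + y).
Proof.
move=> hx hy hs; have e2 := fibre_e_sqr _ _ hx hy hs.
move: hs; rewrite -addrA sqnorm_1D => hs; have := r_kappa; lra.
Qed.

Lemma fibre_coord_unit x y : sqnorm x = 1 -> sqnorm y = 1 -> sqnorm (1 + x + y) = s ->
  sqnorm (fibre_coord x y) = 1.
Proof.
move=> hx hy hs.
have ce : kappa + fibre_e x y ^+ 2 = (1 + Re (x + y)) / r.
  by rewrite -kappa_fibre_e // [r * _]mulrC mulfK.
rewrite (oval_coord_unit kappa_bounds) /on_oval ce /fibre_d !expr_div_n -mulrDl.
rewrite (_ : _ + _ = sqnorm (1 + x + y)); last by rewrite -addrA sqnorm_1D /sqnorm; ring.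
by rewrite hs r_sqr divff //; case/andP: s_bounds => *; apply: lt0r_neq0; lra.
Qed.

Lemma fibre_coordK x y : sqnorm x = 1 -> sqnorm y = 1 -> sqnorm (1 + x + y) = s ->
  fibre_point (fibre_coord x y) = (x, y).
Proof.
move=> hx hy hs; have W0 := sqnorm_add_gt0 _ _ hs.
have sum : fibre_sum (fibre_coord x y) = x + y.
  rewrite /fibre_sum (oval_eK kappa_bounds) (oval_dK kappa_bounds) kappa_fibre_e // /fibre_d.
  by rewrite [1 + _]addrC addrK mulrC divfK //; case: (x + y).
have t : fibre_t (fibre_coord x y) = cross x y / sqnorm (x + y).
  rewrite /fibre_t sum (oval_eK kappa_bounds) /fibre_e -[in RHS](sqr_sqrtr (ltW W0)).
  by field; rewrite sqrt_2r_neq0 sqrtr_eq0 -ltNge W0.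
have exy : sqnorm x = sqnorm y by rewrite hx hy.
by rewrite /fibre_point sum t; have [-> ->] := chord_decomp _ _ exy (lt0r_neq0 W0).
Qed.

Lemma sqnorm_fibre_sum z : sqnorm z = 1 ->
  sqnorm (fibre_sum z) = 4 - 2 * r * oval_e kappa z ^+ 2.
Proof.
move=> /(unit_on_oval kappa_bounds); rewrite /on_oval /sqnorm /fibre_sum /=.
set e := oval_e kappa z; set d := oval_d kappa z => oval.
rewrite [LHS](_ : _ = r ^+ 2 * ((kappa + e ^+ 2) ^+ 2 + d ^+ 2)
                     - 2 * r * kappa - 2 * r * e ^+ 2 + 1); last by ring.
by rewrite oval mulr1 r_sqr r_kappa; ring.
Qed.

Lemma sqnorm_fibre_sum_gt0 z : sqnorm z = 1 -> 0 < sqnorm (fibre_sum z).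
Proof.
move=> hz; rewrite sqnorm_fibre_sum //.
have := unit_on_oval kappa_bounds hz; rewrite /on_oval.
set e := oval_e kappa z; set d := oval_d kappa z => oval.
have e2 : e ^+ 2 <= 1 - kappa by have := sqr_ge0 d; have := sqr_ge0 e; nra.
have := r_kappa; have := r_gt1; have := r_sqr; nra.
Qed.

Lemma fibre_point_unit z : sqnorm z = 1 ->
  sqnorm (fibre_point z).1 = 1 /\ sqnorm (fibre_point z).2 = 1.
Proof.
move=> hz; have W0 := sqnorm_fibre_sum_gt0 _ hz.
have r2 : 0 <= 2 * r by have := r_gt1; lra.
suff W1 : sqnorm (fibre_sum z) * (4^-1 + fibre_t z ^+ 2) = 1.
  by rewrite /= sqnorm_chord1 sqnorm_chord2 W1.
rewrite /fibre_t (sqnorm_fibre_sum _ hz) in W0 *.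
move: (oval_e kappa z) W0 => e W0; have W0' := ltW W0.
by rewrite expr_div_n !exprMn !sqr_sqrtr //; field; rewrite lt0r_neq0.
Qed.

Lemma fibre_point_level z : sqnorm z = 1 ->
  sqnorm (1 + (fibre_point z).1 + (fibre_point z).2) = s.
Proof.
move=> /(unit_on_oval kappa_bounds); rewrite /on_oval -addrA chord_add.
rewrite sqnorm_1D /sqnorm /fibre_sum /=.
set e := oval_e kappa z; set d := oval_d kappa z => oval.
transitivity (r ^+ 2 * ((kappa + e ^+ 2) ^+ 2 + d ^+ 2)); first by ring.
by rewrite oval mulr1.
Qed.

Lemma fibre_pointK z : sqnorm z = 1 -> fibre_coord (fibre_point z).1 (fibre_point z).2 = z.
Proof.
move=> hz; have W0 := sqnorm_fibre_sum_gt0 _ hz.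
rewrite -[RHS](oval_coordK kappa_bounds) /fibre_coord /fibre_e /fibre_d.
rewrite [(fibre_point z).1]/= [(fibre_point z).2]/= chord_add cross_chord.
congr oval_coord.
  rewrite /fibre_t -{1}[sqnorm _](sqr_sqrtr (ltW W0)).
  by field; rewrite sqrt_2r_neq0 sqrtr_eq0 -ltNge W0.
by rewrite /fibre_sum /= [r * _]mulrC mulfK.
Qed.

End Fibre.

Section FibreContinuity.
Context {R : realType} {T : Type} {F : set_system T} {FF : Filter F}.
Local Notation C := (CC R).

Section OvalContinuity.
Context {K : T -> R} {k : R}.
Hypotheses (k_bounds : -1 < k < 1) (hK : K @ F --> k).

Lemma cvg_oval_coord [E D : T -> R] [e d : R] : E @ F --> e -> D @ F --> d ->
  (fun t => oval_coord (K t) (E t) (D t)) @ F --> oval_coord k e d.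
Proof.
move=> hE hD; rewrite /oval_coord; cvg_auto; have := sqr_ge0 e.
all: case/andP: k_bounds => *; rewrite ?mulf_neq0 // sqrt_neq0 //; lra.
Qed.

Lemma cvg_oval_e [Z : T -> C] [z : C] : Z @ F --> z ->
  (fun t => oval_e (K t) (Z t)) @ F --> oval_e k z.
Proof. by move=> hZ; rewrite /oval_e; cvg_auto. Qed.

Lemma cvg_oval_d [Z : T -> C] [z : C] : Z @ F --> z ->
  (fun t => oval_d (K t) (Z t)) @ F --> oval_d k z.
Proof. by move=> hZ; have hE := cvg_oval_e hZ; rewrite /oval_d; cvg_auto. Qed.

End OvalContinuity.

Context {S : T -> R} {s : R}.
Hypotheses (s_bounds : 1 < s < 9) (hS : S @ F --> s).

Let sqrt_s_gt0 : 0 < Num.sqrt s.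
Proof. by rewrite sqrtr_gt0; case/andP: s_bounds => *; lra. Qed.

Lemma cvg_kappa : (fun t => kappa (S t)) @ F --> kappa s.
Proof. by rewrite /kappa; cvg_auto; rewrite mulf_neq0 // lt0r_neq0. Qed.

Lemma cvg_fibre_e [X Y : T -> C] [x y : C] : X @ F --> x -> Y @ F --> y ->
  0 < sqnorm (x + y) ->
  (fun t => fibre_e (S t) (X t) (Y t)) @ F --> fibre_e s x y.
Proof.
move=> hX hY W0; rewrite /fibre_e /cross; cvg_auto.
by rewrite mulf_neq0 // sqrt_neq0 // mulr_gt0.
Qed.

Lemma cvg_fibre_d [X Y : T -> C] [x y : C] : X @ F --> x -> Y @ F --> y ->
  (fun t => fibre_d (S t) (X t) (Y t)) @ F --> fibre_d s x y.
Proof.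
by move=> hX hY; rewrite /fibre_d; cvg_auto; rewrite lt0r_neq0.
Qed.

Lemma cvg_fibre_coord [X Y : T -> C] [x y : C] : X @ F --> x -> Y @ F --> y ->
  sqnorm (1 + x + y) = s ->
  (fun t => fibre_coord (S t) (X t) (Y t)) @ F --> fibre_coord s x y.
Proof.
move=> hX hY hs; have W0 := sqnorm_add_gt0 _ s_bounds _ _ hs.
exact: (cvg_oval_coord (kappa_bounds _ s_bounds) cvg_kappa
  (cvg_fibre_e hX hY W0) (cvg_fibre_d hX hY)).
Qed.

Lemma cvg_fibre_point [Z : T -> C] [z : C] : Z @ F --> z -> sqnorm z = 1 ->
  (fun t => fibre_point (S t) (Z t)) @ F --> fibre_point s z.
Proof.
move=> hZ hz; have hK := cvg_kappa.
have hE := cvg_oval_e hK hZ; have hD := cvg_oval_d hK hZ.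
have hU : (fun t => fibre_sum (S t) (Z t)) @ F --> fibre_sum s z.
  by rewrite /fibre_sum; cvg_auto.
have hT : (fun t => fibre_t (S t) (Z t)) @ F --> fibre_t s z.
  rewrite /fibre_t; cvg_auto.
  by rewrite mulf_neq0 // sqrt_neq0 // sqnorm_fibre_sum_gt0.
rewrite /fibre_point; apply: (@cvg_pair _ _ _ _
  (nbhs (chord1 (fibre_sum s z) (fibre_t s z))) (nbhs (chord2 (fibre_sum s z) (fibre_t s z)))).
  by rewrite /chord1; cvg_auto.
by rewrite /chord2; cvg_auto.
Qed.

End FibreContinuity.

Section Cycle.
Context {R : realType}.
Local Notation C := (CC R).
Local Notation Re := (@complex.Re R).

Lemma P6_unitE (x y s : C) : `|x| = 1 -> `|y| = 1 ->
  P6 x y s = s - (sqnorm (1 + x + y))%:C.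
Proof.
move=> hx hy; rewrite /P6 (invC_norm x) (invC_norm y) hx hy expr1n invr1 !mul1r.
congr (_ - _); case: x {hx} => x1 x2; case: y {hy} => y1 y2.
by apply/eqP; rewrite eq_complex /sqnorm /=; apply/andP; split; apply/eqP; ring.
Qed.

Lemma sqnorm_1DD_ge9 (x y : C) : sqnorm x = 1 -> sqnorm y = 1 ->
  9 <= sqnorm (1 + x + y) -> x = 1 /\ y = 1.
Proof.
case: x y => [x1 x2] [y1 y2]; rewrite /sqnorm /= => hx hy h9.
have dot : x1 * y1 + x2 * y2 <= 1.
  by have := sqr_ge0 (x1 - y1); have := sqr_ge0 (x2 - y2); lra.
have x11 : x1 = 1 by have := sqr_ge0 x2; have := sqr_ge0 y2; nra.
have y11 : y1 = 1 by have := sqr_ge0 x2; have := sqr_ge0 y2; nra.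
have x20 : x2 = 0 by apply/eqP; rewrite -sqrf_eq0; apply/eqP; move: hx; rewrite x11; lra.
have y20 : y2 = 0 by apply/eqP; rewrite -sqrf_eq0; apply/eqP; move: hy; rewrite y11; lra.
by rewrite x11 x20 y11 y20.
Qed.

Lemma nine_complex : 9 = (9 : R)%:C :> C.
Proof. by rewrite rmorph_nat. Qed.

Lemma interval_1_9E (v : R) : interval_1_9 R v%:C <-> 1 < v < 9.
Proof.
have oneC : (1 : C) = (1 +i* 0) by [].
split=> [[_ /andP[]]|/andP[v1 v9]].
  by rewrite oneC nine_complex !ltcE /= => /andP[_ ->] /andP[_ ->].
split; first by rewrite complex_real.
by rewrite oneC nine_complex !ltcE /= eqxx v1 v9.
Qed.

Lemma interval_1_9_real (b : C) : interval_1_9 R b -> b = (Re b)%:C.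
Proof. by case=> /RRe_real. Qed.

Lemma punctured_cycleP (p : C * C * C) :
  (deninger_cycle R `\` [set ((1, 1), 9%:R)]) p <->
  [/\ sqnorm p.1.1 = 1, sqnorm p.1.2 = 1, 1 < sqnorm (1 + p.1.1 + p.1.2) < 9
    & p.2 = (sqnorm (1 + p.1.1 + p.1.2))%:C].
Proof.
case: p => [[x y] s] /=; set v := sqnorm (1 + x + y).
have v0 : 0 <= v%:C :> C by rewrite lecR sqnorm_ge0.
split=> [[[[_ _ _ hP] [hx hy hs]] hnot]|[hx hy hv sE]].
  have sE : s = v%:C by apply/eqP; rewrite -subr_eq0 /v -P6_unitE // hP.
  move/norm1E in hx; move/norm1E in hy.
  move: hs; rewrite sE ger0_norm // -[1 : C]/(1%:C) ltcR => v1.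
  split=> //; rewrite v1 /= ltNge; apply/negP => /(sqnorm_1DD_ge9 x y hx hy) [x1 y1].
  by apply: hnot; rewrite sE /v x1 y1 nine_complex /sqnorm /=; congr (_, _%:C); ring.
have [v1 v9] : 1 < v /\ v < 9 by apply/andP.
have hx1 : `|x| = 1 by apply/norm1E.
have hy1 : `|y| = 1 by apply/norm1E.
split; [split; split | by case=> _ _ /(congr1 Re); rewrite sE nine_complex /=; lra].
- by rewrite -normr_eq0 hx1 oner_eq0.
- by rewrite -normr_eq0 hy1 oner_eq0.
- by rewrite sE; apply/eqP => /(congr1 Re) /=; lra.
- by rewrite P6_unitE // sE subrr.
- exact: hx1.
- exact: hy1.
- by rewrite sE ger0_norm // -[1 : C]/(1%:C) ltcR.
Qed.

End Cycle.

Section Trivialization.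
Context {R : realType}.
Local Notation C := (CC R).
Local Notation Re := (@complex.Re R).
Local Notation cycle := (deninger_cycle R `\` [set ((1, 1), 9%:R)]).

Definition unit_circle : set C := [set z | `|z| = 1].

Definition to_circle (z : C) : set_type unit_circle :=
  match pselect (unit_circle z) with
  | left h => exist _ z (mem_set h)
  | right _ => exist _ 1 (mem_set (normr1 C))
  end.

Lemma to_circleK z : unit_circle z -> val (to_circle z) = z.
Proof. by rewrite /to_circle; case: pselect. Qed.

Lemma unit_circle_sqnorm (z : set_type unit_circle) : sqnorm (val z) = 1.
Proof. by apply/norm1E; have := set_valP z. Qed.

Lemma cvg_to_circle (T : Type) (G : set_system T) {FG : Filter G}
  (f : T -> set_type unit_circle) (z : set_type unit_circle) :
  (fun t => val (f t)) @ G --> val z -> f @ G --> z.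
Proof.
move=> fz U [?/= [[W oW <-]]] /= Wz /filterS; apply; apply: fz.
by apply: open_nbhs_nbhs; split => //; move: Wz; rewrite set_valE.
Qed.

Definition trivialize (p : C * C * C) : C * set_type unit_circle :=
  (p.2, to_circle (fibre_coord (Re p.2) p.1.1 p.1.2)).

Definition untrivialize (q : C * set_type unit_circle) : C * C * C :=
  (fibre_point (Re q.1) (val q.2), q.1).

Lemma trivializeK p : cycle p ->
  [/\ interval_1_9 R p.2, unit_circle (fibre_coord (Re p.2) p.1.1 p.1.2)
    & untrivialize (trivialize p) = p].
Proof.
case/punctured_cycleP => hx hy hv sE.
have Rs : Re p.2 = sqnorm (1 + p.1.1 + p.1.2) by rewrite sE.
have hu : unit_circle (fibre_coord (Re p.2) p.1.1 p.1.2).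
  by apply/norm1E; rewrite Rs fibre_coord_unit.
split=> //; first by rewrite sE interval_1_9E.
rewrite /untrivialize /trivialize /= to_circleK // Rs (fibre_coordK _ hv) //.
by rewrite -!surjective_pairing.
Qed.

Lemma untrivializeK q : interval_1_9 R q.1 ->
  cycle (untrivialize q) /\ trivialize (untrivialize q) = q.
Proof.
case: q => b z /= hb; have bE := interval_1_9_real _ hb.
move: hb; rewrite bE interval_1_9E => hb; have hz := unit_circle_sqnorm z.
have [hx hy] := fibre_point_unit _ hb _ hz; have hs := fibre_point_level _ hb _ hz.
split; first by apply/punctured_cycleP; rewrite /= hs.
rewrite /trivialize /untrivialize /= (fibre_pointK _ hb) //; congr (_, _).
by apply: val_inj; rewrite to_circleK //; apply/norm1E.
Qed.

Lemma trivialize_continuous (D : set (C * C * C)) : D `<=` cycle ->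
  {within D, continuous trivialize}.
Proof.
move=> DA; apply/subspace_continuousP => p Dp.
have [hb hu _] := trivializeK _ (DA _ Dp).
apply: (@cvg_pair _ _ _ _ (nbhs p.2) (nbhs (to_circle (fibre_coord (Re p.2) p.1.1 p.1.2)))).
  by apply: cvg_within_filter; exact: cvg_snd.
apply: cvg_to_circle; rewrite to_circleK //.
have eqD : {in D, (fun q => val (to_circle (fibre_coord (Re q.2) q.1.1 q.1.2))) =1
                 (fun q => fibre_coord (Re q.2) q.1.1 q.1.2)}.
  by move=> q /set_mem Dq; rewrite to_circleK //; have [] := trivializeK _ (DA _ Dq).
apply: cvg_trans (fmap_within_eq _ eqD) _; apply: cvg_within_filter.
case/punctured_cycleP: (DA _ Dp) => _ _ hv sE.
have Rs : Re p.2 = sqnorm (1 + p.1.1 + p.1.2) by rewrite sE.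
rewrite Rs in hv *; apply: (cvg_fibre_coord hv) => //.
- by rewrite -Rs; apply: cvg_Re; exact: cvg_snd.
- exact: (cvg_comp _ _ (@cvg_fst _ _ _ _ _) (@cvg_fst _ _ _ _ _)).
- exact: (cvg_comp _ _ (@cvg_fst _ _ _ _ _) (@cvg_snd _ _ _ _ _)).
Qed.

Lemma untrivialize_continuous (D : set (C * set_type unit_circle)) :
  (forall q, D q -> interval_1_9 R q.1) -> {within D, continuous untrivialize}.
Proof.
move=> DB; apply/subspace_continuousP => q Dq; apply: cvg_within_filter.
have hb := DB _ Dq; have bE := interval_1_9_real _ hb.
move: hb; rewrite bE interval_1_9E => hb.
apply: (@cvg_pair _ _ _ _ (nbhs (untrivialize q).1) (nbhs q.1)); last exact: cvg_fst.
apply: (cvg_fibre_point hb); first by apply: cvg_Re; exact: cvg_fst.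
  apply: (cvg_comp (fun t : C * set_type unit_circle => t.2) (fun z => val z)).
    exact: cvg_snd.
  have val_continuous : continuous (fun z : set_type unit_circle => val z).
    by have := @initial_continuous (set_type unit_circle) C set_val; rewrite set_valE.
  exact: val_continuous.
exact: unit_circle_sqnorm.
Qed.

End Trivialization.

Theorem lemma9p6 (R : realType) :
  fibration_above (fun p : CC R * CC R * CC R => p.2)
    (deninger_cycle R `\` [set ((1, 1), 9%:R)])
    (interval_1_9 R).
Proof.
split.
  apply/seteqP; split=> [_ [p /trivializeK[hb _ _] <-] //|b hb].
  by exists (untrivialize (b, to_circle 1)); have [] := untrivializeK (b, to_circle 1) hb.
move=> b _; exists setT; split=> //; first exact: openT.
exists (set_type unit_circle), trivialize, untrivialize => /=; split.
- by apply: trivialize_continuous => p [].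
- by apply: untrivialize_continuous => q [[_ ?] _].
- by move=> p [/trivializeK[hb _ hK] _]; split=> //; split.
- by move=> q [[_ hb] _]; have [hA hK] := untrivializeK q hb; split=> //; split.
Qed.
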